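(* Let $K$ be a positive definite $n\times n$ matrix and $H$ any $n\times n$ complex matrix. For real exponents $p,s$ define, on positive definite $n\times n$ matrices $A$, \[ \psi_p^s(A)=\bigl(K+H^*A^pH\bigr)^s . \] If $-1\le p\le0$ and $-1\le s\le0$, then $\psi_p^s$ is concave, i.e. $\psi_p^s(\lambda A+(1-\lambda)B)\ge\lambda\psi_p^s(A)+(1-\lambda)\psi_p^s(B)$ in the Loewner order for all positive definite $A,B$ and $\lambda\in[0,1]$.
   Context: Powers of positive definite matrices are defined by functional calculus; the Loewner order is $X\ge Y$ iff $X-Y$ is positive semidefinite. *)

From HB Require Import structures.
From mathcomp Require Import all_boot all_order all_algebra.
From mathcomp Require Import sesquilinear spectral.
From mathcomp Require Import complex.
From mathcomp Require Import reals exp.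

Set Implicit Arguments.
Unset Strict Implicit.
Unset Printing Implicit Defensive.

Import Order.TTheory GRing.Theory Num.Theory.
Local Open Scope ring_scope.
Local Open Scope complex_scope.
Local Open Scope sesquilinear_scope.

Definition mxadj (R : realType) (m n : nat) (M : 'M[R[i]]_(m, n)) : 'M[R[i]]_(n, m) :=
  M ^t*.

Definition hermitian (R : realType) (n : nat) (M : 'M[R[i]]_n) : Prop :=
  mxadj M = M.

Definition posdef (R : realType) (n : nat) (M : 'M[R[i]]_n) : Prop :=
  hermitian M /\ forall u : 'rV[R[i]]_n, u != 0 -> 0 < (u *m M *m mxadj u) 0 0.

Definition psd (R : realType) (n : nat) (M : 'M[R[i]]_n) : Prop :=
  hermitian M /\ forall u : 'rV[R[i]]_n, 0 <= (u *m M *m mxadj u) 0 0.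

Definition loewner_ge (R : realType) (n : nat) (X Y : 'M[R[i]]_n) : Prop :=
  psd (X - Y).

(* Real power A^p by functional calculus: A = P^-1 diag(d) P with P unitary
   (spectral theorem for normal matrices); A^p := P^-1 diag(d^p) P.
   For positive definite A the d_j are positive reals and d_j^p = powR d_j p. *)
Definition mxpowR (R : realType) (n : nat) (A : 'M[R[i]]_n) (p : R) : 'M[R[i]]_n :=
  invmx (spectralmx A)
  *m diag_mx (\row_j ((powR (complex.Re (spectral_diag A 0 j)) p)%:C))
  *m spectralmx A.

Definition psi (R : realType) (n : nat) (K H : 'M[R[i]]_n) (p s : R)
    (A : 'M[R[i]]_n) : 'M[R[i]]_n :=
  mxpowR (K + mxadj H *m mxpowR A p *m H) s.

(* By the Woodbury identity, (K + H^* A^p H)^-1 = G(A^-p), where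
   G(Z) = K^-1 - K^-1 H^* W^-1 H K^-1 with W = Z + H K^-1 H^*.  Matrix
   inversion is operator antitone and convex, so G is operator monotone and
   concave, and psi_p^s(A) = G(A^q)^r with q = -p and r = -s in [0, 1].  By
   the Loewner-Heinz theorem X |-> X^t is operator monotone and concave for
   t in [0, 1], and a monotone concave map composed with concave maps is
   concave.  Loewner-Heinz is proved first for dyadic t, using the matrix
   geometric mean A # B, which is jointly monotone and concave (it is the
   largest X with [[A, X], [X, B]] >= 0) and satisfies A # A^t = A^((1+t)/2)
   and 1 # A^t = A^(t/2); it extends to all t since the quadratic forms of
   X^t are continuous in t. *)

From Pilot Require Import Defs.
From HB Require Import structures.
From mathcomp Require Import all_boot all_order all_algebra.
From mathcomp Require Import sesquilinear spectral complex reals exp.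
From mathcomp Require Import boolp topology normedtype sequences.
From mathcomp Require Import ring lra.

Set Implicit Arguments.
Unset Strict Implicit.
Unset Printing Implicit Defensive.

Import Order.TTheory GRing.Theory Num.Theory.
Import numFieldNormedType.Exports.
Local Open Scope ring_scope.
Local Open Scope complex_scope.
Local Open Scope sesquilinear_scope.

Local Notation "A ⪯ B" := (loewner_ge B A) (at level 70, no associativity).
Local Notation mix l A B := (l%:C *: A + (1 - l)%:C *: B).

Section ConjugateTranspose.
Variable C : numClosedFieldType.

Lemma trmxC_mul m n p (A : 'M[C]_(m, n)) (B : 'M[C]_(n, p)) :
  (A *m B) ^t* = B ^t* *m A ^t*.
Proof. by rewrite trmx_mul map_mxM. Qed.

Lemma trmxCD m n (A B : 'M[C]_(m, n)) : (A + B) ^t* = A ^t* + B ^t*.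
Proof. by rewrite linearD /= map_mxD. Qed.

Lemma trmxCB m n (A B : 'M[C]_(m, n)) : (A - B) ^t* = A ^t* - B ^t*.
Proof. by rewrite linearB /= map_mxB. Qed.

Lemma trmxCZ m n (a : C) (A : 'M[C]_(m, n)) : (a *: A) ^t* = a^* *: A ^t*.
Proof. by rewrite linearZ /= map_mxZ. Qed.

Lemma trmxC0 m n : (0 : 'M[C]_(m, n)) ^t* = 0.
Proof. by rewrite trmx0 map_mx0. Qed.

Lemma trmxC1 n : (1%:M : 'M[C]_n) ^t* = 1%:M.
Proof. by rewrite trmx1 map_mx1. Qed.

Lemma trmxC_row_mx m n1 n2 (A : 'M[C]_(m, n1)) (B : 'M[C]_(m, n2)) :
  (row_mx A B) ^t* = col_mx (A ^t*) (B ^t*).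
Proof. by rewrite tr_row_mx map_col_mx. Qed.

Lemma trmxC_col_mx m1 m2 n (A : 'M[C]_(m1, n)) (B : 'M[C]_(m2, n)) :
  (col_mx A B) ^t* = row_mx (A ^t*) (B ^t*).
Proof. by rewrite tr_col_mx map_row_mx. Qed.

Lemma trmxC_block_mx m1 m2 n1 n2 (A : 'M[C]_(m1, n1)) (X : 'M[C]_(m1, n2))
    (Y : 'M[C]_(m2, n1)) (B : 'M[C]_(m2, n2)) :
  (block_mx A X Y B) ^t* = block_mx (A ^t*) (Y ^t*) (X ^t*) (B ^t*).
Proof. by rewrite tr_block_mx map_block_mx. Qed.

Definition qform n (M : 'M[C]_n) (u : 'rV[C]_n) : C := (u *m M *m u ^t*) 0 0.

Lemma qformD n (A B : 'M[C]_n) u : qform (A + B) u = qform A u + qform B u.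
Proof. by rewrite /qform mulmxDr mulmxDl mxE. Qed.

Lemma qformB n (A B : 'M[C]_n) u : qform (A - B) u = qform A u - qform B u.
Proof. by rewrite /qform mulmxBr mulmxBl !mxE. Qed.

Lemma qformZ n (a : C) (A : 'M[C]_n) u : qform (a *: A) u = a * qform A u.
Proof. by rewrite /qform -scalemxAr -scalemxAl mxE. Qed.

Lemma qform_congr k m (N : 'M[C]_(k, m)) (M : 'M[C]_m) u :
  qform (N *m M *m N ^t*) u = qform M (u *m N).
Proof. by rewrite /qform trmxC_mul !mulmxA. Qed.

Lemma qform_block m n (A : 'M[C]_m) (X : 'M[C]_(m, n)) (Y : 'M[C]_(n, m))
    (B : 'M[C]_n) u1 u2 :
  qform (block_mx A X Y B) (row_mx u1 u2) =
  qform A u1 + (u1 *m X *m u2 ^t*) 0 0 + (u2 *m Y *m u1 ^t*) 0 0 + qform B u2.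
Proof.
rewrite /qform trmxC_row_mx mul_row_block mul_row_col !mulmxDl !mxE.
by rewrite addrACA addrA.
Qed.

Lemma gram_ge0 n (u : 'rV[C]_n) : 0 <= (u *m u ^t*) 0 0.
Proof. by rewrite -dotmxE dnorm_ge0. Qed.

Lemma gram_gt0 n (u : 'rV[C]_n) : u != 0 -> 0 < (u *m u ^t*) 0 0.
Proof. by rewrite -dotmxE dnorm_gt0. Qed.

End ConjugateTranspose.

Section LoewnerOrder.
Variable R : realType.
Local Notation C := R[i].

Lemma trmxCZr m n (a : R) (A : 'M[C]_(m, n)) : (a%:C *: A) ^t* = a%:C *: A ^t*.
Proof. by rewrite trmxCZ; congr (_ *: _); exact: conjc_real. Qed.

Lemma hermitianD n (A B : 'M[C]_n) :
  Defs.hermitian A -> Defs.hermitian B -> Defs.hermitian (A + B).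
Proof. by rewrite /Defs.hermitian /mxadj trmxCD => -> ->. Qed.

Lemma hermitianB n (A B : 'M[C]_n) :
  Defs.hermitian A -> Defs.hermitian B -> Defs.hermitian (A - B).
Proof. by rewrite /Defs.hermitian /mxadj trmxCB => -> ->. Qed.

Lemma hermitianZ n (a : R) (A : 'M[C]_n) : Defs.hermitian A -> Defs.hermitian (a%:C *: A).
Proof. by rewrite /Defs.hermitian /mxadj trmxCZr => ->. Qed.

Lemma hermitian_congr k m (N : 'M[C]_(k, m)) (M : 'M[C]_m) :
  Defs.hermitian M -> Defs.hermitian (N *m M *m N ^t*).
Proof. by rewrite /Defs.hermitian /mxadj !trmxC_mul trmxCK mulmxA => ->. Qed.

Lemma psd0 n : psd (0 : 'M[C]_n).
Proof.
split; first by rewrite /Defs.hermitian /mxadj trmxC0.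
by move=> u; rewrite mulmx0 mul0mx mxE.
Qed.

Lemma psdD n (A B : 'M[C]_n) : psd A -> psd B -> psd (A + B).
Proof.
move=> [hA pA] [hB pB]; split; first exact: hermitianD.
by move=> u; rewrite -/(qform _ _) qformD addr_ge0 ?pA ?pB.
Qed.

Lemma psdZ n (a : R) (A : 'M[C]_n) : 0 <= a -> psd A -> psd (a%:C *: A).
Proof.
move=> a0 [hA pA]; split; first exact: hermitianZ.
by move=> u; rewrite -/(qform _ _) qformZ mulr_ge0 ?ler0c ?pA.
Qed.

Lemma psd_congr k m (N : 'M[C]_(k, m)) (M : 'M[C]_m) : psd M -> psd (N *m M *m N ^t*).
Proof.
move=> [hM pM]; split; first exact: hermitian_congr.
by move=> u; rewrite -/(qform _ _) qform_congr pM.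
Qed.

Lemma psd_gram k m (N : 'M[C]_(k, m)) : psd (N *m N ^t*).
Proof.
split; first by rewrite /Defs.hermitian /mxadj trmxC_mul trmxCK.
by move=> u; rewrite mulmxA -[u](trmxCK) -mulmxA -trmxC_mul trmxCK gram_ge0.
Qed.

Lemma posdef_psd n (A : 'M[C]_n) : posdef A -> psd A.
Proof.
move=> [hA pA]; split => // u; have [->|u0] := eqVneq u 0.
  by rewrite !mul0mx mxE.
exact/ltW/pA.
Qed.

Lemma posdefDl n (A B : 'M[C]_n) : posdef A -> psd B -> posdef (A + B).
Proof.
move=> [hA pA] [hB pB]; split; first exact: hermitianD.
by move=> u u0; rewrite -/(qform _ _) qformD ltr_wpDr ?pB ?pA.
Qed.

Lemma posdefZ n (a : R) (A : 'M[C]_n) : 0 < a -> posdef A -> posdef (a%:C *: A).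
Proof.
move=> a0 [hA pA]; split; first exact: hermitianZ.
by move=> u u0; rewrite -/(qform _ _) qformZ mulr_gt0 ?ltcR ?pA.
Qed.

Lemma posdef_congr n (M N : 'M[C]_n) : posdef M -> N \in unitmx ->
  posdef (N *m M *m N ^t*).
Proof.
move=> [hM pM] Nu; split; first exact: hermitian_congr.
move=> u u0; rewrite -/(qform _ _) qform_congr; apply: pM.
by apply: contra u0 => /eqP uN0; rewrite -(mulmxK Nu u) uN0 mul0mx.
Qed.

Lemma posdef1 n : posdef (1%:M : 'M[C]_n).
Proof.
split; first by rewrite /Defs.hermitian /mxadj trmxC1.
by move=> u u0; rewrite mulmx1 gram_gt0.
Qed.

Lemma posdef_mix n (A B : 'M[C]_n) (l : R) : posdef A -> posdef B ->
  0 <= l <= 1 -> posdef (mix l A B).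
Proof.
move=> pA pB /andP [l0 l1].
have [->|ln0] := eqVneq l 0.
  by rewrite scale0r add0r subr0 scale1r.
apply: posdefDl; first by apply: posdefZ; rewrite // lt_def ln0.
by apply: psdZ; [rewrite subr_ge0 | apply: posdef_psd].
Qed.

Lemma psd_mix n (A B : 'M[C]_n) (l : R) : 0 <= l <= 1 -> psd A -> psd B ->
  psd (mix l A B).
Proof. by move=> /andP [l0 l1] pA pB; apply: psdD; apply: psdZ; rewrite ?subr_ge0. Qed.

Lemma mixxx n (A : 'M[C]_n) (l : R) : mix l A A = A.
Proof. by rewrite -scalerDl -rmorphD addrC subrK scale1r. Qed.

Lemma loewner_refl n (A : 'M[C]_n) : A ⪯ A.
Proof. by rewrite /loewner_ge subrr; apply: psd0. Qed.

Lemma loewner_trans n (A B D : 'M[C]_n) : A ⪯ B -> B ⪯ D -> A ⪯ D.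
Proof. by move=> AB BD; rewrite /loewner_ge -(subrK B D) -addrA; apply: psdD. Qed.

Lemma loewnerD n (A B A' B' : 'M[C]_n) : A ⪯ B -> A' ⪯ B' -> A + A' ⪯ B + B'.
Proof. by move=> AB AB'; rewrite /loewner_ge opprD addrACA; apply: psdD. Qed.

Lemma loewner_congr k m (N : 'M[C]_(k, m)) (A B : 'M[C]_m) :
  A ⪯ B -> N *m A *m N ^t* ⪯ N *m B *m N ^t*.
Proof. by move=> AB; rewrite /loewner_ge -mulmxBl -mulmxBr; apply: psd_congr. Qed.

Lemma loewnerBr n (D A B : 'M[C]_n) : A ⪯ B -> D - B ⪯ D - A.
Proof. by rewrite /loewner_ge => AB; rewrite opprB addrC addrA subrK. Qed.

End LoewnerOrder.

Lemma diag_mx_intertwine (R : idomainType) m n (f : R -> R)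
    (e : 'rV[R]_m) (d : 'rV[R]_n) (W : 'M[R]_(m, n)) :
  diag_mx e *m W = W *m diag_mx d ->
  diag_mx (\row_i f (e 0 i)) *m W = W *m diag_mx (\row_j f (d 0 j)).
Proof.
move=> eW; apply/matrixP => i j; rewrite mul_diag_mx mul_mx_diag !mxE.
have /matrixP /(_ i j) := eW; rewrite mul_diag_mx mul_mx_diag !mxE => eWij.
have [->|Wij0] := eqVneq (W i j) 0; first by rewrite mulr0 mul0r.
suff -> : e 0 i = d 0 j by rewrite mulrC.
by apply: (mulIf Wij0); rewrite eWij mulrC.
Qed.

Section FunctionalCalculus.
Variable C : numClosedFieldType.

Definition udiag n (U : 'M[C]_n) (d : 'rV[C]_n) := U ^t* *m diag_mx d *m U.

(* [mxpowR A p] unfolds to [mxfun (fun z => (powR (Re z) p)%:C) A]. *)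
Definition mxfun n (f : C -> C) (A : 'M[C]_n) :=
  invmx (spectralmx A) *m diag_mx (\row_j f (spectral_diag A 0 j)) *m spectralmx A.

Lemma udiag_normal n (U : 'M[C]_n) d : U \is unitarymx -> udiag U d \is normalmx.
Proof.
by move=> Uu; apply/orthomx_spectral_subproof; exists (U, d); rewrite //= invmx_unitary.
Qed.

Lemma mxfun_udiag n (f : C -> C) (U : 'M[C]_n) d : U \is unitarymx ->
  mxfun f (udiag U d) = udiag U (\row_j f (d 0 j)).
Proof.
move=> Uu; set A := udiag U d.
have /orthomx_spectralP eA := udiag_normal d Uu; rewrite -/A in eA.
set P := spectralmx A in eA *; set e := spectral_diag A in eA *.
have Pu : P \is unitarymx := spectral_unitarymx A.
rewrite invmx_unitary // in eA; rewrite /mxfun -/P -/e invmx_unitary //.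
have PA : P *m A = diag_mx e *m P by rewrite {1}eA !mulmxA (unitarymxP Pu) mul1mx.
have eW : diag_mx e *m (P *m U ^t*) = (P *m U ^t*) *m diag_mx d.
  by rewrite mulmxA -PA /A /udiag !mulmxA mulmxtVK.
have PtP : P ^t* *m P = 1%:M by rewrite -[P ^t*]mul1mx mulmxKtV.
have PU : P = P *m U ^t* *m U by rewrite mulmxKtV.
rewrite [X in _ *m X]PU mulmxA -[P ^t* *m _ *m (P *m U ^t*)]mulmxA.
by rewrite (diag_mx_intertwine f eW) !mulmxA PtP mul1mx.
Qed.

Lemma qform_udiag n (U : 'M[C]_n) d u :
  qform (udiag U d) u = \sum_j d 0 j * ((u *m U ^t*) 0 j * ((u *m U ^t*) 0 j)^*).
Proof.
rewrite /udiag -[X in _ *m X](trmxCK U) qform_congr /qform mul_mx_diag mxE.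
by apply: eq_bigr => j _; rewrite !mxE mulrAC mulrC.
Qed.

Lemma row_udiag n (U : 'M[C]_n) d j : U \is unitarymx ->
  row j U *m udiag U d = d 0 j *: row j U.
Proof.
move=> Uu; rewrite /udiag !mulmxA -row_mul (unitarymxP Uu) row1.
by rewrite -rowE row_diag_mx -scalemxAl -rowE.
Qed.

Lemma qform_row_udiag n (U : 'M[C]_n) d j : U \is unitarymx ->
  qform (udiag U d) (row j U) = d 0 j.
Proof.
move=> Uu; rewrite /qform row_udiag // -scalemxAl mxE -dotmxE.
by have /row_unitarymxP -> := Uu; rewrite eqxx mulr1.
Qed.

Lemma unitary_row_neq0 n (U : 'M[C]_n) j : U \is unitarymx -> row j U != 0.
Proof.
move=> /row_unitarymxP Uu; apply/eqP => Uj0.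
have := Uu j j; rewrite dotmxE Uj0 mul0mx mxE eqxx => /esym/eqP.
by rewrite oner_eq0.
Qed.

End FunctionalCalculus.

Section HermitianSpectrum.
Variable R : realType.
Local Notation C := R[i].

Definition hdiag n (U : 'M[C]_n) (d : 'rV[R]_n) :=
  udiag U (map_mx (real_complex R) d).

Lemma hermitian_hdiag n (U : 'M[C]_n) (d : 'rV[R]_n) : Defs.hermitian (hdiag U d).
Proof.
rewrite /Defs.hermitian /mxadj /hdiag /udiag !trmxC_mul trmxCK mulmxA.
rewrite tr_diag_mx map_diag_mx; congr (_ *m diag_mx _ *m _).
by apply/rowP => j; rewrite !mxE; apply: conjc_real.
Qed.

Lemma qform_row_hdiag n (U : 'M[C]_n) (d : 'rV[R]_n) j : U \is unitarymx ->
  qform (hdiag U d) (row j U) = (d 0 j)%:C.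
Proof. by move=> Uu; rewrite qform_row_udiag // mxE. Qed.

Lemma psd_hdiag n (U : 'M[C]_n) (d : 'rV[R]_n) :
  (forall j, 0 <= d 0 j) -> psd (hdiag U d).
Proof.
move=> d0; split=> [|u]; first exact: hermitian_hdiag.
rewrite -/(qform _ _) qform_udiag; apply: sumr_ge0 => j _.
by rewrite mxE mulr_ge0 ?ler0c ?mul_conjC_ge0.
Qed.

Lemma posdef_hdiag n (U : 'M[C]_n) (d : 'rV[R]_n) :
  U \is unitarymx -> (forall j, 0 < d 0 j) -> posdef (hdiag U d).
Proof.
move=> Uu d0; split=> [|u u0]; first exact: hermitian_hdiag.
rewrite -/(qform _ _) qform_udiag; set v := u *m U ^t*.
have [j vj0] : exists j, v 0 j != 0.
  apply/existsP; apply: contraR u0 => /existsPn v0.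
  have v00 : v = 0 by apply/rowP => j; have := v0 j; rewrite negbK !mxE => /eqP.
  by rewrite -(mulmxKtV u Uu) // -/v v00 mul0mx.
rewrite (bigD1 j) //= ltr_wpDr //.
  by apply: sumr_ge0 => i _; rewrite mxE mulr_ge0 ?ler0c ?mul_conjC_ge0 ?ltW.
by rewrite mxE mulr_gt0 ?ltcR ?mul_conjC_gt0.
Qed.

Lemma posdef_hdiag_gt0 n (U : 'M[C]_n) (d : 'rV[R]_n) j :
  U \is unitarymx -> posdef (hdiag U d) -> 0 < d 0 j.
Proof.
move=> Uu [_ /(_ _ (unitary_row_neq0 j Uu))].
by rewrite -/(qform _ _) qform_row_hdiag // ltcR.
Qed.

Lemma hermitian_spectral_decomp n (A : 'M[C]_n) : Defs.hermitian A ->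
  exists U d, U \is unitarymx /\ A = hdiag U d.
Proof.
move=> hA; have Aherm : A \is hermsymmx.
  by apply/is_hermitianmxP; rewrite expr0 scale1r [RHS]hA.
have /orthomx_spectralP eA := hermitian_normalmx Aherm.
have /mxOverP realA := hermitian_spectral_diag_real Aherm.
exists (spectralmx A), (\row_j complex.Re (spectral_diag A 0 j)); split.
  exact: spectral_unitarymx.
rewrite {1}eA (invmx_unitary (spectral_unitarymx A)); congr (_ *m diag_mx _ *m _).
by apply/rowP => j; rewrite !mxE RRe_real ?realA.
Qed.

Lemma posdef_spectral_decomp n (A : 'M[C]_n) : posdef A ->
  exists U d, [/\ U \is unitarymx, A = hdiag U d & forall j, 0 < d 0 j].
Proof.
move=> pA; have [U [d [Uu eA]]] := hermitian_spectral_decomp pA.1.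
by exists U, d; split=> // j; apply: posdef_hdiag_gt0 Uu _; rewrite -eA.
Qed.

Lemma mxpowR_hdiag n (U : 'M[C]_n) (d : 'rV[R]_n) p : U \is unitarymx ->
  mxpowR (hdiag U d) p = hdiag U (\row_j powR (d 0 j) p).
Proof.
move=> Uu; rewrite [LHS](mxfun_udiag (fun z => (powR (complex.Re z) p)%:C) _ Uu).
by congr udiag; apply/rowP => j; rewrite !mxE.
Qed.

Lemma hdiag_mul n (U : 'M[C]_n) (d e : 'rV[R]_n) : U \is unitarymx ->
  hdiag U d *m hdiag U e = hdiag U (\row_j (d 0 j * e 0 j)).
Proof.
move=> Uu; rewrite /hdiag /udiag !mulmxA mulmxtVK // -!mulmxA; congr (_ *m _).
rewrite !mulmxA; congr (_ *m _); apply/matrixP => i j; rewrite mul_diag_mx !mxE.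
by case: eqP => [->|_]; rewrite ?mulr1n ?mulr0n ?mulr0 ?rmorphM.
Qed.

Lemma hdiag1 n (U : 'M[C]_n) : U \is unitarymx -> hdiag U (const_mx 1) = 1%:M.
Proof.
move=> Uu; rewrite /hdiag /udiag map_const_mx rmorph1 diag_const_mx mulmx1.
by rewrite -[U ^t*]mul1mx mulmxKtV.
Qed.

End HermitianSpectrum.

Section MatrixPowers.
Variable R : realType.
Local Notation C := R[i].

Lemma posdef_mxpowR n (A : 'M[C]_n) a : posdef A -> posdef (mxpowR A a).
Proof.
move=> /posdef_spectral_decomp [U [d [Uu -> d0]]]; rewrite (mxpowR_hdiag _ _ Uu).
by apply: posdef_hdiag => // j; rewrite mxE powR_gt0.
Qed.

Lemma trmxC_mxpowR n (A : 'M[C]_n) a : posdef A -> (mxpowR A a) ^t* = mxpowR A a.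
Proof. by move=> /(posdef_mxpowR a) []. Qed.

Lemma mxpowRD n (A : 'M[C]_n) a b : posdef A ->
  mxpowR A a *m mxpowR A b = mxpowR A (a + b).
Proof.
move=> /posdef_spectral_decomp [U [d [Uu -> d0]]].
rewrite !(mxpowR_hdiag _ _ Uu) (hdiag_mul _ _ Uu); congr hdiag; apply/rowP => j.
by rewrite !mxE powRD // (gt_eqF (d0 j)) implybT.
Qed.

Lemma mxpowRM n (A : 'M[C]_n) a b : posdef A ->
  mxpowR (mxpowR A a) b = mxpowR A (a * b).
Proof.
move=> /posdef_spectral_decomp [U [d [Uu -> d0]]].
by rewrite !(mxpowR_hdiag _ _ Uu); congr hdiag; apply/rowP => j; rewrite !mxE powRrM.
Qed.

Lemma mxpowR1 n (A : 'M[C]_n) : posdef A -> mxpowR A 1 = A.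
Proof.
move=> /posdef_spectral_decomp [U [d [Uu -> d0]]]; rewrite (mxpowR_hdiag _ _ Uu).
by congr hdiag; apply/rowP => j; rewrite mxE powRr1 ?ltW.
Qed.

Lemma mxpowR0 n (A : 'M[C]_n) : posdef A -> mxpowR A 0 = 1%:M.
Proof.
move=> /posdef_spectral_decomp [U [d [Uu -> d0]]].
rewrite (mxpowR_hdiag _ _ Uu) -(hdiag1 Uu).
by congr hdiag; apply/rowP => j; rewrite !mxE powRr0.
Qed.

Lemma mxpowR_mulV n (A : 'M[C]_n) a : posdef A ->
  mxpowR A a *m mxpowR A (- a) = 1%:M.
Proof. by move=> pA; rewrite (mxpowRD _ _ pA) subrr (mxpowR0 pA). Qed.

Lemma mxpowR_mulNV n (A : 'M[C]_n) a : posdef A ->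
  mxpowR A (- a) *m mxpowR A a = 1%:M.
Proof. by move=> pA; rewrite (mxpowRD _ _ pA) addNr (mxpowR0 pA). Qed.

Lemma mxpowR_unitmx n (A : 'M[C]_n) a : posdef A -> mxpowR A a \in unitmx.
Proof. by move=> pA; exact: (mulmx1_unit (mxpowR_mulV a pA)).1. Qed.

Lemma invmx_mxpowR n (A : 'M[C]_n) a : posdef A ->
  invmx (mxpowR A a) = mxpowR A (- a).
Proof.
move=> pA; rewrite -[RHS]mul1mx -(mulVmx (mxpowR_unitmx a pA)) -mulmxA.
by rewrite (mxpowR_mulV a pA) mulmx1.
Qed.

Lemma posdef_unitmx n (A : 'M[C]_n) : posdef A -> A \in unitmx.
Proof. by move=> pA; rewrite -(mxpowR1 pA) mxpowR_unitmx. Qed.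

Lemma invmx_posdef n (A : 'M[C]_n) : posdef A -> invmx A = mxpowR A (-1).
Proof. by move=> pA; rewrite -(invmx_mxpowR 1 pA) (mxpowR1 pA). Qed.

Lemma posdef_invmx n (A : 'M[C]_n) : posdef A -> posdef (invmx A).
Proof. by move=> pA; rewrite (invmx_posdef pA); apply: posdef_mxpowR. Qed.

Lemma trmxC_invmx n (A : 'M[C]_n) : posdef A -> (invmx A) ^t* = invmx A.
Proof. by move=> /posdef_invmx []. Qed.

Lemma mxpowR_half n (A : 'M[C]_n) : posdef A -> mxpowR A 2^-1 *m mxpowR A 2^-1 = A.
Proof. by move=> pA; rewrite (mxpowRD _ _ pA) -div1r -splitr (mxpowR1 pA). Qed.

Lemma mxpowR_Nhalf n (A : 'M[C]_n) : posdef A ->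
  mxpowR A (- 2^-1) *m mxpowR A (- 2^-1) = invmx A.
Proof.
by move=> pA; rewrite (mxpowRD _ _ pA) -opprD -div1r -splitr (invmx_posdef pA).
Qed.

End MatrixPowers.

Section SchurComplement.
Variable R : realType.
Local Notation C := R[i].

Lemma psd_block_diag m n (P : 'M[C]_m) (Q : 'M[C]_n) : psd P -> psd Q ->
  psd (block_mx P 0 0 Q).
Proof.
move=> [hP pP] [hQ pQ]; split.
  by rewrite /Defs.hermitian /mxadj trmxC_block_mx !trmxC0 [P ^t*]hP [Q ^t*]hQ.
move=> u; rewrite -/(qform _ _) -(hsubmxK u) qform_block !mulmx0 !mul0mx !mxE.
by rewrite !addr0 addr_ge0 ?pP ?pQ.
Qed.

Lemma psd_schur m n (A : 'M[C]_m) (X : 'M[C]_(m, n)) (B : 'M[C]_n) : A \in unitmx ->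
  psd (block_mx A X (X ^t*) B) -> psd (B - X ^t* *m invmx A *m X).
Proof.
move=> Au /(psd_congr (row_mx (- (X ^t* *m invmx A)) 1%:M)).
rewrite mul_row_block trmxC_row_mx mul_row_col !mul1mx mulNmx mulmxKV //.
by rewrite addNr mul0mx add0r trmxC1 mulmx1 mulNmx addrC.
Qed.

Lemma row_hdiag n (U : 'M[C]_n) (d : 'rV[R]_n) j : U \is unitarymx ->
  row j U *m hdiag U d = (d 0 j)%:C *: row j U.
Proof. by move=> Uu; rewrite row_udiag // mxE. Qed.

(* If r is an eigenvector of T - Y for the eigenvalue d, then
   r (T^2 - Y^2) r^* = d r T r^* + d r Y r^*, so d cannot be negative. *)
Lemma loewner_sqrt n (Y T : 'M[C]_n) : psd Y -> posdef T ->
  Y *m Y ⪯ T *m T -> Y ⪯ T.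
Proof.
move=> pY pT YT; have hTY := hermitianB pT.1 pY.1.
have [U [d [Uu eTY]]] := hermitian_spectral_decomp hTY.
rewrite /loewner_ge eTY; apply: psd_hdiag => j; rewrite leNgt; apply/negP => dj0.
set r := row j U.
have rTY : r *m (T - Y) = (d 0 j)%:C *: r by rewrite eTY row_hdiag.
have TYr : (T - Y) *m r ^t* = (d 0 j)%:C *: r ^t*.
  by rewrite -[T - Y]hTY -trmxC_mul rTY trmxCZr.
have qTY : qform (T *m T - Y *m Y) r = (d 0 j)%:C * (qform T r + qform Y r).
  have -> : T *m T - Y *m Y = T *m (T - Y) + (T - Y) *m Y.
    by rewrite mulmxBr mulmxBl addrA subrK.
  rewrite qformD mulrDr /qform mulmxA -(mulmxA _ (T - Y)) TYr -scalemxAr mxE.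
  by rewrite mulmxA rTY -!scalemxAl !mxE.
have qTY_gt0 : 0 < qform T r + qform Y r.
  exact: ltr_wpDr (pY.2 r) (pT.2 _ (unitary_row_neq0 j Uu)).
have := YT.2 r; rewrite -/(qform _ _) qTY pmulr_lge0 // ler0c => d0.
by move: dj0; rewrite ltNge d0.
Qed.

End SchurComplement.

Section GeometricMean.
Variable R : realType.
Local Notation C := R[i].

Definition mxgmean n (A B : 'M[C]_n) :=
  mxpowR A 2^-1 *m mxpowR (mxpowR A (- 2^-1) *m B *m mxpowR A (- 2^-1)) 2^-1
    *m mxpowR A 2^-1.

Lemma posdef_mxpowR_congr n (A B : 'M[C]_n) a : posdef A -> posdef B ->
  posdef (mxpowR A a *m B *m mxpowR A a).
Proof.
move=> pA pB; rewrite -{2}(trmxC_mxpowR a pA).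
exact: posdef_congr pB (mxpowR_unitmx a pA).
Qed.

Lemma posdef_mxgmean n (A B : 'M[C]_n) : posdef A -> posdef B -> posdef (mxgmean A B).
Proof.
move=> pA pB; apply: (posdef_mxpowR_congr _ pA).
by apply: posdef_mxpowR; apply: posdef_mxpowR_congr.
Qed.

Lemma psd_block_mxgmean n (A B : 'M[C]_n) : posdef A -> posdef B ->
  psd (block_mx A (mxgmean A B) (mxgmean A B) B).
Proof.
move=> pA pB; have pC := posdef_mxpowR_congr (- 2^-1) pA pB.
have TT := mxpowR_half pC; have hT := trmxC_mxpowR 2^-1 pC.
have SS := mxpowR_half pA; have hS := trmxC_mxpowR 2^-1 pA.
have SSi := mxpowR_mulV 2^-1 pA; have SiS := mxpowR_mulNV 2^-1 pA.
(* Generalizing the powers keeps [rewrite] from unfolding [mxpowR]. *)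
rewrite /mxgmean; move: (mxpowR (_ *m B *m _) 2^-1) TT hT => T TT hT.
move: (mxpowR A 2^-1) (mxpowR A (- 2^-1)) SS hS SSi SiS TT => S Si SS hS SSi SiS TT.
have := psd_gram (col_mx S (S *m T)).
rewrite trmxC_col_mx mul_col_row trmxC_mul hS hT SS mulmxA.
suff -> : S *m T *m (T *m S) = B by [].
by rewrite mulmxA -(mulmxA S T) TT !mulmxA SSi mul1mx -mulmxA SiS mulmx1.
Qed.

Lemma mxgmean_max n (A B X : 'M[C]_n) : posdef A -> posdef B -> psd X ->
  psd (block_mx A X X B) -> X ⪯ mxgmean A B.
Proof.
move=> pA pB pX hb; have hX : X ^t* = X := pX.1.
have := @psd_schur _ _ _ A X B (posdef_unitmx pA); rewrite hX => /(_ hb).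
have pC := posdef_mxpowR_congr (- 2^-1) pA pB.
have TT := mxpowR_half pC; have pT := posdef_mxpowR 2^-1 pC.
have hS := trmxC_mxpowR 2^-1 pA; have hSi := trmxC_mxpowR (- 2^-1) pA.
have SSi := mxpowR_mulV 2^-1 pA; have SiS := mxpowR_mulNV 2^-1 pA.
rewrite -(mxpowR_Nhalf pA) /mxgmean; move: (mxpowR (_ *m B *m _) 2^-1) TT pT.
move=> T TT pT.
move: (mxpowR A 2^-1) (mxpowR A (- 2^-1)) hS hSi SSi SiS TT => S Si hS hSi SSi SiS TT.
move=> /(psd_congr Si); rewrite hSi mulmxBr mulmxBl -TT.
have -> : Si *m (X *m (Si *m Si) *m X) *m Si = (Si *m X *m Si) *m (Si *m X *m Si).
  by rewrite !mulmxA.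
move=> YT; have /(loewner_congr S) : Si *m X *m Si ⪯ T.
  by apply: loewner_sqrt YT => //; rewrite -{2}hSi; apply: psd_congr.
by rewrite hS !mulmxA SSi mul1mx -[X *m Si *m S]mulmxA SiS mulmx1.
Qed.

Lemma mxgmean_mono n (A A' B B' : 'M[C]_n) :
  posdef A -> posdef A' -> posdef B -> posdef B' ->
  A ⪯ A' -> B ⪯ B' -> mxgmean A B ⪯ mxgmean A' B'.
Proof.
move=> pA pA' pB pB' AA' BB'.
apply: mxgmean_max => //; first exact/posdef_psd/posdef_mxgmean.
have -> : block_mx A' (mxgmean A B) (mxgmean A B) B' =
    block_mx A (mxgmean A B) (mxgmean A B) B + block_mx (A' - A) 0 0 (B' - B).
  by rewrite add_block_mx !addr0 [A + _]addrC [B + _]addrC !subrK.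
by apply: psdD; [exact: psd_block_mxgmean | exact: psd_block_diag].
Qed.

Lemma mxgmean_concave n (A1 A2 B1 B2 : 'M[C]_n) (l : R) :
  posdef A1 -> posdef A2 -> posdef B1 -> posdef B2 -> 0 <= l <= 1 ->
  mix l (mxgmean A1 B1) (mxgmean A2 B2) ⪯ mxgmean (mix l A1 A2) (mix l B1 B2).
Proof.
move=> pA1 pA2 pB1 pB2 l01.
apply: mxgmean_max; [exact: posdef_mix | exact: posdef_mix | |].
  by apply: psd_mix => //; apply/posdef_psd/posdef_mxgmean.
rewrite -add_block_mx -!scale_block_mx.
by apply: psd_mix => //; apply: psd_block_mxgmean.
Qed.

Lemma powR_gmean (e f : R) : 0 < e -> 0 < f ->
  powR e 2^-1 * powR (powR e (- 2^-1) * f * powR e (- 2^-1)) 2^-1 * powR e 2^-1 =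
  powR (e * f) 2^-1.
Proof.
move=> e0 f0; have powRE (x r : R) : 0 < x -> powR x r = expR (r * ln x).
  by move=> x0; rewrite /powR gt_eqF.
have g0 : 0 < powR e (- 2^-1) by apply: powR_gt0.
have lng : ln (powR e (- 2^-1)) = - 2^-1 * ln e by rewrite powRE // expRK.
rewrite (powRE _ _ (mulr_gt0 e0 f0)) (powRE _ _ e0) powRE ?mulr_gt0 //.
rewrite !lnM ?posrE ?mulr_gt0 // lng -!expRD; congr expR; lra.
Qed.

End GeometricMean.

Section LoewnerHeinzDyadic.
Variable R : realType.
Local Notation C := R[i].

Lemma mxgmean_hdiag n (U : 'M[C]_n) (e f : 'rV[R]_n) : U \is unitarymx ->
  (forall j, 0 < e 0 j) -> (forall j, 0 < f 0 j) ->
  mxgmean (hdiag U e) (hdiag U f) = hdiag U (\row_j powR (e 0 j * f 0 j) 2^-1).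
Proof.
move=> Uu e0 f0; rewrite /mxgmean !(mxpowR_hdiag e _ Uu).
(* An unrestricted [hdiag_mul] would try to unfold [mxpowR]. *)
rewrite ![in X in mxpowR X _](hdiag_mul _ _ Uu) (mxpowR_hdiag _ _ Uu).
rewrite !(hdiag_mul _ _ Uu).
by congr hdiag; apply/rowP => j; rewrite !mxE powR_gmean.
Qed.

Lemma mxgmean_mxpowR n (A : 'M[C]_n) r : posdef A ->
  mxgmean A (mxpowR A r) = mxpowR A ((1 + r) / 2).
Proof.
move=> /posdef_spectral_decomp [U [d [Uu -> d0]]].
have dr0 j : 0 < (\row_j powR (d 0 j) r) 0 j by rewrite mxE powR_gt0.
rewrite !(mxpowR_hdiag _ _ Uu) (mxgmean_hdiag Uu d0 dr0); congr hdiag.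
apply/rowP => j; rewrite !mxE -{1}(powRr1 (ltW (d0 j))) -powRD; last first.
  by rewrite (gt_eqF (d0 j)) implybT.
by rewrite -powRrM.
Qed.

Lemma mxgmean1_mxpowR n (A : 'M[C]_n) r : posdef A ->
  mxgmean 1%:M (mxpowR A r) = mxpowR A (r / 2).
Proof.
move=> /posdef_spectral_decomp [U [d [Uu -> d0]]].
have dr0 j : 0 < (\row_j powR (d 0 j) r) 0 j by rewrite mxE powR_gt0.
have one0 j : 0 < (const_mx 1 : 'rV[R]_n) 0 j by rewrite mxE.
rewrite -(hdiag1 Uu) !(mxpowR_hdiag _ _ Uu) (mxgmean_hdiag Uu one0 dr0); congr hdiag.
by apply/rowP => j; rewrite !mxE mul1r -powRrM.
Qed.

Definition pow_monotone (r : R) := forall n (A B : 'M[C]_n), posdef A -> posdef B ->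
  A ⪯ B -> mxpowR A r ⪯ mxpowR B r.

Definition pow_concave (r : R) := forall n (A B : 'M[C]_n) (l : R),
  posdef A -> posdef B -> 0 <= l <= 1 ->
  mix l (mxpowR A r) (mxpowR B r) ⪯ mxpowR (mix l A B) r.

Lemma pow_monotone0 : pow_monotone 0.
Proof.
by move=> n A B pA pB _; rewrite (mxpowR0 pA) (mxpowR0 pB); apply: loewner_refl.
Qed.

Lemma pow_concave0 : pow_concave 0.
Proof.
move=> n A B l pA pB l01; rewrite (mxpowR0 pA) (mxpowR0 pB) mixxx.
by rewrite (mxpowR0 (posdef_mix pA pB l01)); apply: loewner_refl.
Qed.

Lemma pow_monotone1 : pow_monotone 1.
Proof. by move=> n A B pA pB; rewrite (mxpowR1 pA) (mxpowR1 pB). Qed.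

Lemma pow_concave1 : pow_concave 1.
Proof.
move=> n A B l pA pB l01; rewrite (mxpowR1 pA) (mxpowR1 pB).
by rewrite (mxpowR1 (posdef_mix pA pB l01)); apply: loewner_refl.
Qed.

(* Used with G = id, giving the exponent (1 + r) / 2, and with G = 1, giving r / 2. *)
Lemma pow_monotone_concave_mxgmean (G : forall n, 'M[C]_n -> 'M[C]_n) (r a : R) :
  (forall n (A : 'M[C]_n), posdef A -> posdef (G n A)) ->
  (forall n (A B : 'M[C]_n), A ⪯ B -> G n A ⪯ G n B) ->
  (forall n (A B : 'M[C]_n) l, mix l (G n A) (G n B) ⪯ G n (mix l A B)) ->
  (forall n (A : 'M[C]_n), posdef A -> mxgmean (G n A) (mxpowR A r) = mxpowR A a) ->
  pow_monotone r -> pow_concave r -> pow_monotone a /\ pow_concave a.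
Proof.
move=> pG monoG concG Gr monor concr; split=> [n A B pA pB AB|n A B l pA pB l01].
  rewrite -(Gr _ _ pA) -(Gr _ _ pB).
  by apply: mxgmean_mono; [exact: pG | exact: pG | exact: posdef_mxpowR |
    exact: posdef_mxpowR | exact: monoG | exact: monor].
have pM := posdef_mix pA pB l01.
have [pAr pBr] := (posdef_mxpowR r pA, posdef_mxpowR r pB).
rewrite -(Gr _ _ pA) -(Gr _ _ pB) -(Gr _ _ pM).
apply: loewner_trans (mxgmean_concave (pG _ _ pA) (pG _ _ pB) pAr pBr l01) _.
apply: mxgmean_mono; [exact: posdef_mix (pG _ _ pA) (pG _ _ pB) l01 | exact: pG |
  exact: posdef_mix pAr pBr l01 | exact: posdef_mxpowR | exact: concG | exact: concr].
Qed.

Lemma pow_monotone_concave_dyadic m k : (k <= 2 ^ m)%N ->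
  pow_monotone (k%:R / (2 ^ m)%:R) /\ pow_concave (k%:R / (2 ^ m)%:R).
Proof.
elim: m k => [|m IHm] k.
  rewrite expn0 divr1; case: k => [|[|//]] _.
    by split; [exact: pow_monotone0 | exact: pow_concave0].
  by split; [exact: pow_monotone1 | exact: pow_concave1].
have p2 : (2 ^ m)%:R != 0 :> R by rewrite pnatr_eq0 expn_eq0.
move=> k2m; have [km|mk] := leqP k (2 ^ m).
  have [monok conck] := IHm k km.
  apply: (@pow_monotone_concave_mxgmean (fun n (_ : 'M[C]_n) => 1%:M) _ _
    _ _ _ _ monok conck).
  - by move=> n _ _; apply: posdef1.
  - by move=> n A B _; apply: loewner_refl.
  - by move=> n A B l; rewrite mixxx; apply: loewner_refl.
  - move=> n A pA; rewrite (mxgmean1_mxpowR _ pA); congr mxpowR.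
    by rewrite expnS natrM invfM mulrA mulrAC.
have k2m' : (k - 2 ^ m <= 2 ^ m)%N by rewrite leq_subLR addnn -mul2n -expnS.
have [monok conck] := IHm _ k2m'.
apply: (@pow_monotone_concave_mxgmean (fun n (A : 'M[C]_n) => A) _ _
  _ _ _ _ monok conck) => //.
- by move=> n A B l; apply: loewner_refl.
- move=> n A pA; rewrite (mxgmean_mxpowR _ pA); congr mxpowR.
  by rewrite natrB ?(ltnW mk) // expnS natrM; field; rewrite p2.
Qed.

End LoewnerHeinzDyadic.

Section DyadicApproximation.
Variable R : realType.

Lemma dyadic_approx (x e : R) : 0 <= x <= 1 -> 0 < e ->
  exists m k, (k <= 2 ^ m)%N /\ `|x - k%:R / (2 ^ m)%:R| < e.
Proof.
move=> /andP [x0 x1] e0; set m := Num.bound e^-1.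
have p2 : (0 : R) < (2 ^ m)%:R by rewrite ltr0n expn_gt0.
have em : e^-1 < (2 ^ m)%:R.
  apply: lt_le_trans (archi_boundP _) _; first by rewrite invr_ge0 ltW.
  by rewrite ler_nat ltnW // ltn_expl.
set k := Num.truncn (x * (2 ^ m)%:R).
have /andP [kx xk] := truncn_itv (mulr_ge0 x0 (ltW p2)).
exists m, k; split.
  rewrite -(ler_nat R); apply: le_trans kx _.
  by rewrite -{2}(mul1r (2 ^ m)%:R) ler_pM2r.
have k_le_x : k%:R / (2 ^ m)%:R <= x by rewrite ler_pdivrMr.
have x_lt_k1 : x < k.+1%:R / (2 ^ m)%:R by rewrite ltr_pdivlMr.
have k1E : k.+1%:R / (2 ^ m)%:R = k%:R / (2 ^ m)%:R + (2 ^ m)%:R^-1 :> R.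
  by rewrite -natr1 mulrDl mul1r.
have inv_lt_e : (2 ^ m)%:R^-1 < e by rewrite -[e]invrK ltf_pV2 ?posrE ?invr_gt0.
by rewrite ger0_norm ?subr_ge0 //; lra.
Qed.

Lemma continuous_ge0_dyadic (phi : R -> R) x : {for x, continuous phi} ->
  0 <= x <= 1 -> (forall m k, (k <= 2 ^ m)%N -> 0 <= phi (k%:R / (2 ^ m)%:R)) ->
  0 <= phi x.
Proof.
move=> cphi x01 phi_dyadic; rewrite leNgt; apply/negP => phix.
have [e /= e0 phi_lt0] := (nbhs_ballP _ _).1 (@cvgr_lt _ _ _ _ phi _ cphi 0 phix).
have [m [k [km xk]]] := dyadic_approx x01 e0.
by have := phi_dyadic m k km; rewrite leNgt phi_lt0 // -ball_normE.
Qed.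

Lemma continuous_powRr (d : R) : 0 < d -> continuous (powR d).
Proof.
move=> d0 t; have -> : powR d = expR \o (fun s => s * ln d).
  by apply/funext => s /=; rewrite /powR gt_eqF.
apply: continuous_comp; last exact: continuous_expR.
by apply: continuousM; [exact: cvg_id | exact: cst_continuous].
Qed.

End DyadicApproximation.

Section LoewnerHeinz.
Variable R : realType.
Local Notation C := R[i].

Definition cont_qform n (F : R -> 'M[C]_n) := forall u, exists2 phi : R -> R,
  continuous phi & forall t, qform (F t) u = (phi t)%:C.

Lemma cont_qform_mxpowR n (X : 'M[C]_n) : posdef X -> cont_qform (mxpowR X).
Proof.
move=> /posdef_spectral_decomp [U [d [Uu -> d0]]] u; set v := u *m U ^t*.
exists (fun t => \sum_j powR (d 0 j) t * complex.Re (v 0 j * (v 0 j)^*)).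
  apply: continuous_big => [|j _]; first exact: add_continuous.
  by move=> t; apply: continuousM; [exact: continuous_powRr | exact: cst_continuous].
move=> t; rewrite (mxpowR_hdiag _ _ Uu) qform_udiag rmorph_sum; apply: eq_bigr => j _.
by rewrite !mxE rmorphM /= RRe_real // ger0_real // mul_conjC_ge0.
Qed.

Lemma cont_qformB n (F G : R -> 'M[C]_n) : cont_qform F -> cont_qform G ->
  cont_qform (fun t => F t - G t).
Proof.
move=> cF cG u; have [[phi cphi ephi] [psi cpsi epsi]] := (cF u, cG u).
exists (fun t => phi t - psi t).
  by move=> t; exact: (continuousB (cphi t) (cpsi t)).
by move=> t; rewrite qformB ephi epsi rmorphB.
Qed.

Lemma cont_qform_mix n (l : R) (F G : R -> 'M[C]_n) : cont_qform F -> cont_qform G ->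
  cont_qform (fun t => mix l (F t) (G t)).
Proof.
move=> cF cG u; have [[phi cphi ephi] [psi cpsi epsi]] := (cF u, cG u).
exists (fun t => l * phi t + (1 - l) * psi t).
  move=> t; have cst (a : R) : continuous (fun _ : R => a) by apply: cst_continuous.
  exact: (continuousD (continuousM (cst l t) (cphi t)) (continuousM (cst _ t) (cpsi t))).
by move=> t; rewrite qformD !qformZ ephi epsi -!rmorphM -rmorphD.
Qed.

Lemma psd_of_dyadic n (F : R -> 'M[C]_n) r : 0 <= r <= 1 ->
  (forall t, Defs.hermitian (F t)) -> cont_qform F ->
  (forall m k, (k <= 2 ^ m)%N -> psd (F (k%:R / (2 ^ m)%:R))) -> psd (F r).
Proof.
move=> r01 hF cF psdF; split=> [|u]; first exact: hF.
have [phi cphi ephi] := cF u; rewrite -/(qform _ _) ephi ler0c.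
apply: (continuous_ge0_dyadic (cphi r) r01) => m k km.
by have [_ /(_ u)] := psdF m k km; rewrite -/(qform _ _) ephi ler0c.
Qed.

Theorem loewner_heinz (r : R) : 0 <= r <= 1 -> pow_monotone r /\ pow_concave r.
Proof.
move=> r01; split=> [n A B pA pB AB|n A B l pA pB l01].
  apply: (@psd_of_dyadic _ (fun t => mxpowR B t - mxpowR A t) _ r01).
  - by move=> t; apply: hermitianB; exact: trmxC_mxpowR.
  - exact: cont_qformB (cont_qform_mxpowR pB) (cont_qform_mxpowR pA).
  - by move=> m k km; have [+ _] := @pow_monotone_concave_dyadic R _ _ km; apply.
have pM := posdef_mix pA pB l01.
apply: (@psd_of_dyadic _
  (fun t => mxpowR (mix l A B) t - mix l (mxpowR A t) (mxpowR B t)) _ r01).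
- move=> t; apply: hermitianB; first exact: trmxC_mxpowR.
  by apply: hermitianD; apply: hermitianZ; exact: trmxC_mxpowR.
- apply: cont_qformB (cont_qform_mxpowR pM) _.
  exact: cont_qform_mix (cont_qform_mxpowR pA) (cont_qform_mxpowR pB).
- by move=> m k km; have [_ +] := @pow_monotone_concave_dyadic R _ _ km; apply.
Qed.

End LoewnerHeinz.

Section InverseAndWoodbury.
Variable R : realType.
Local Notation C := R[i].

Lemma psd_block_invmx n (X : 'M[C]_n) : posdef X ->
  psd (block_mx X 1%:M 1%:M (invmx X)).
Proof.
move=> pX; have hS := trmxC_mxpowR 2^-1 pX; have hSi := trmxC_mxpowR (- 2^-1) pX.
have SS := mxpowR_half pX; have SiSi := mxpowR_Nhalf pX.
have SSi := mxpowR_mulV 2^-1 pX; have SiS := mxpowR_mulNV 2^-1 pX.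
move: (mxpowR X 2^-1) (mxpowR X (- 2^-1)) hS hSi SS SiSi SSi SiS.
move=> S Si hS hSi SS SiSi SSi SiS; have := psd_gram (col_mx S Si).
by rewrite trmxC_col_mx mul_col_row hS hSi SS SiSi SSi SiS.
Qed.

Lemma loewner_schur_invmx n (Y Z : 'M[C]_n) : posdef Y ->
  psd (block_mx Y 1%:M 1%:M Z) -> invmx Y ⪯ Z.
Proof.
move=> pY; have := @psd_schur _ _ _ Y 1%:M Z (posdef_unitmx pY).
by rewrite trmxC1 mul1mx mulmx1.
Qed.

Lemma invmx_antitone n (X Y : 'M[C]_n) : posdef X -> posdef Y -> X ⪯ Y ->
  invmx Y ⪯ invmx X.
Proof.
move=> pX pY XY; apply: loewner_schur_invmx pY _.
have -> : block_mx Y 1%:M 1%:M (invmx X) =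
    block_mx X 1%:M 1%:M (invmx X) + block_mx (Y - X) 0 0 0.
  by rewrite add_block_mx !addr0 addrC subrK.
by apply: psdD; [exact: psd_block_invmx | exact: psd_block_diag XY (@psd0 R n)].
Qed.

Lemma invmx_convex n (X Y : 'M[C]_n) (l : R) : posdef X -> posdef Y -> 0 <= l <= 1 ->
  invmx (mix l X Y) ⪯ mix l (invmx X) (invmx Y).
Proof.
move=> pX pY l01; apply: loewner_schur_invmx (posdef_mix pX pY l01) _.
have -> : block_mx (mix l X Y) 1%:M 1%:M (mix l (invmx X) (invmx Y)) =
    mix l (block_mx X 1%:M 1%:M (invmx X)) (block_mx Y 1%:M 1%:M (invmx Y)).
  by rewrite !scale_block_mx add_block_mx !mixxx.
by apply: psd_mix => //; apply: psd_block_invmx.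
Qed.

Definition woodbury n (K H Z : 'M[C]_n) :=
  invmx K - (invmx K *m H ^t*) *m invmx (Z + H *m invmx K *m H ^t*)
    *m (invmx K *m H ^t*) ^t*.

Lemma posdef_woodbury_inner n (K H Z : 'M[C]_n) : posdef K -> posdef Z ->
  posdef (Z + H *m invmx K *m H ^t*).
Proof. by move=> pK pZ; apply/posdefDl/psd_congr/posdef_psd/posdef_invmx. Qed.

Lemma posdef_woodbury_outer n (K H Z : 'M[C]_n) : posdef K -> posdef Z ->
  posdef (K + H ^t* *m invmx Z *m H).
Proof.
move=> pK pZ; apply: posdefDl pK _; rewrite -{2}(trmxCK H).
exact/psd_congr/posdef_psd/posdef_invmx.
Qed.

Lemma invmx_woodbury n (K H Z : 'M[C]_n) : posdef K -> posdef Z ->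
  invmx (K + H ^t* *m invmx Z *m H) = woodbury K H Z.
Proof.
move=> pK pZ; rewrite /woodbury trmxC_mul trmxCK (trmxC_invmx pK).
have KKi : K *m invmx K = 1%:M := mulmxV (posdef_unitmx pK).
have ZiZ : invmx Z *m Z = 1%:M := mulVmx (posdef_unitmx pZ).
have WWi := mulmxV (posdef_unitmx (posdef_woodbury_inner H pK pZ)).
move: (invmx (Z + _)) WWi => Wi WWi.
move: (invmx K) (invmx Z) KKi ZiZ WWi => Ki Zi KKi ZiZ WWi.
suff PG : (K + H ^t* *m Zi *m H) *m (Ki - Ki *m H ^t* *m Wi *m (H *m Ki)) = 1%:M.
  have [Pu _] := mulmx1_unit PG.
  by rewrite -[LHS]mulmx1 -PG mulmxA (mulVmx Pu) mul1mx.
have PKH : (K + H ^t* *m Zi *m H) *m (Ki *m H ^t*) =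
    H ^t* *m Zi *m (Z + H *m Ki *m H ^t*).
  by rewrite mulmxDl mulmxDr !mulmxA KKi mul1mx -(mulmxA _ Zi Z) ZiZ mulmx1.
have PKi : (K + H ^t* *m Zi *m H) *m Ki = 1%:M + H ^t* *m Zi *m H *m Ki.
  by rewrite mulmxDl KKi.
rewrite mulmxBr PKi (mulmxA _ (Ki *m H ^t* *m Wi)) (mulmxA _ (Ki *m H ^t*)) PKH.
by rewrite -(mulmxA _ _ Wi) WWi mulmx1 !mulmxA addrK.
Qed.

End InverseAndWoodbury.

Section WoodburyMap.
Variable R : realType.
Local Notation C := R[i].

Lemma posdef_woodbury n (K H Z : 'M[C]_n) : posdef K -> posdef Z ->
  posdef (woodbury K H Z).
Proof.
move=> pK pZ; rewrite -(invmx_woodbury H pK pZ).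
exact/posdef_invmx/posdef_woodbury_outer.
Qed.

Lemma woodbury_monotone n (K H Z1 Z2 : 'M[C]_n) : posdef K -> posdef Z1 -> posdef Z2 ->
  Z1 ⪯ Z2 -> woodbury K H Z1 ⪯ woodbury K H Z2.
Proof.
move=> pK pZ1 pZ2 Z12; rewrite /woodbury; apply: loewnerBr; apply: loewner_congr.
apply: invmx_antitone; [exact: posdef_woodbury_inner | exact: posdef_woodbury_inner |].
exact: loewnerD Z12 (loewner_refl _).
Qed.

Lemma woodbury_concave n (K H Z1 Z2 : 'M[C]_n) (l : R) :
  posdef K -> posdef Z1 -> posdef Z2 -> 0 <= l <= 1 ->
  mix l (woodbury K H Z1) (woodbury K H Z2) ⪯ woodbury K H (mix l Z1 Z2).
Proof.
move=> pK pZ1 pZ2 l01; rewrite /woodbury.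
have [pW1 pW2] := (posdef_woodbury_inner H pK pZ1, posdef_woodbury_inner H pK pZ2).
move: (invmx K *m H ^t*) (H *m invmx K *m H ^t*) pW1 pW2 => N M pW1 pW2.
have -> : mix l Z1 Z2 + M = mix l (Z1 + M) (Z2 + M) by rewrite !scalerDr addrACA mixxx.
have -> : mix l (invmx K - N *m invmx (Z1 + M) *m N ^t*)
    (invmx K - N *m invmx (Z2 + M) *m N ^t*) =
    invmx K - N *m mix l (invmx (Z1 + M)) (invmx (Z2 + M)) *m N ^t*.
  by rewrite mulmxDr mulmxDl -!scalemxAr -!scalemxAl !scalerBr addrACA mixxx opprD.
by apply: loewnerBr; apply: loewner_congr; apply: invmx_convex.
Qed.

Lemma psi_woodbury n (K H X : 'M[C]_n) (p s : R) : posdef K -> posdef X ->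
  psi K H p s X = mxpowR (woodbury K H (mxpowR X (- p))) (- s).
Proof.
move=> pK pX; have pZ := posdef_mxpowR (- p) pX.
have pP := posdef_woodbury_outer H pK pZ.
rewrite /psi /mxadj -[p in mxpowR X p]opprK -(invmx_mxpowR (- p) pX).
rewrite -(invmx_woodbury H pK pZ).
by rewrite (invmx_posdef pP) (mxpowRM _ _ pP) mulN1r opprK.
Qed.

End WoodburyMap.

Theorem proposition3p3 (R : realType) (n : nat) (K H : 'M[R[i]]_n) (p s : R) :
  posdef K -> -1 <= p <= 0 -> -1 <= s <= 0 ->
  forall (A B : 'M[R[i]]_n) (lam : R),
    posdef A -> posdef B -> 0 <= lam <= 1 ->
    loewner_ge
      (psi K H p s (lam%:C *: A + (1 - lam)%:C *: B))
      (lam%:C *: psi K H p s A + (1 - lam)%:C *: psi K H p s B).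
Proof.
move=> pK /andP [p_ge p_le] /andP [s_ge s_le] A B l pA pB l01.
have [_ concq] := @loewner_heinz R (- p) ltac:(apply/andP; split; lra).
have [monor concr] := @loewner_heinz R (- s) ltac:(apply/andP; split; lra).
have pM := posdef_mix pA pB l01.
rewrite (psi_woodbury _ _ _ pK pA) (psi_woodbury _ _ _ pK pB) (psi_woodbury _ _ _ pK pM).
have pZA := posdef_mxpowR (- p) pA; have pGA := posdef_woodbury H pK pZA.
have pZB := posdef_mxpowR (- p) pB; have pGB := posdef_woodbury H pK pZB.
have pZM := posdef_mxpowR (- p) pM; have pGM := posdef_woodbury H pK pZM.
apply: loewner_trans (concr _ _ _ _ pGA pGB l01) _.
apply: monor; [exact: posdef_mix | exact: pGM |].
apply: loewner_trans (woodbury_concave H pK pZA pZB l01) _.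
exact: woodbury_monotone pK (posdef_mix pZA pZB l01) pZM (concq _ _ _ _ pA pB l01).
Qed.
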